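(* Under the standing setup, assume that $f$ is bounded, i.e. $\sup_{q\in\mathcal P}\|f_q\|_\infty<\infty$. Then there exists a constant $L>0$ such that $\|\mathscr S(t)u_0-u_0\|_\infty\le Lt\|u_0\|_\infty$ for all $t\ge0$ and $u_0\in\mathbb R^d$.
   Context: Standing setup: $d\in\mathbb N$; vectors in $\mathbb R^d$ with $\|u\|_\infty=\max_i|u_i|$; inequalities and suprema of vectors are componentwise; reals are identified with constant vectors. A $Q$-matrix is $q\in\mathbb R^{d\times d}$ with $q_{ii}\le0$, $q_{ij}\ge0$ ($i\ne j$), $\sum_jq_{ij}=0$. Let $\mathcal P$ be a set of $Q$-matrices and $f=(f_q)_{q\in\mathcal P}\subset\mathbb R^d$ with $\sup_{q\in\mathcal P}f_q=f_{q_0}=0$ for some $q_0\in\mathcal P$, such that $\mathcal Qu:=\sup_{q\in\mathcal P}(qu+f_q)$ is finite for every $u\in\mathbb R^d$. For $q\in\mathcal P$, $t\ge0$: $S_q(t)u_0:=e^{tq}u_0+\int_0^te^{sq}f_q\,ds$. For $h\ge0$: $\mathcal E_hu_0:=\sup_{q\in\mathcal P}S_q(h)u_0$. $P$ is the set of finite subsets $\pi\subset[0,\infty)$ with $0\in\pi$; $P_t:=\{\pi\in P:\max\pi=t\}$. For $\pi=\{t_0,\dots,t_m\}$ with $0=t_0<\dots<t_m$, $m\ge1$, $\mathcal E_\pi:=\mathcal E_{t_1-t_0}\circ\cdots\circ\mathcal E_{t_m-t_{m-1}}$, and $\mathcal E_{\{0\}}:=\mathcal E_0$. The Nisio semigroup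 of $(\mathcal P,f)$ is $\mathscr S(t)u_0:=\sup_{\pi\in P_t}\mathcal E_\pi u_0$. *)

From Stdlib Require Import Arith Reals Lra List Sorting.Sorted ClassicalEpsilon.
Open Scope R_scope.

(* Vectors in R^d are functions nat -> R (only indices i < d matter);
   matrices in R^{d x d} are functions nat -> nat -> R. *)
Definition vec := nat -> R.
Definition mat := nat -> nat -> R.

Fixpoint sumR (n : nat) (g : nat -> R) : R :=
  match n with O => 0 | S m => sumR m g + g m end.

Fixpoint norm_inf_aux (n : nat) (u : vec) : R :=
  match n with O => 0 | S m => Rmax (norm_inf_aux m u) (Rabs (u m)) end.
Definition norm_inf (d : nat) (u : vec) : R := norm_inf_aux d u.

Definition mv (d : nat) (q : mat) (u : vec) : vec :=
  fun i => sumR d (fun j => q i j * u j).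

Definition is_Qmatrix (d : nat) (q : mat) : Prop :=
  (forall i, (i < d)%nat -> q i i <= 0) /\
  (forall i j, (i < d)%nat -> (j < d)%nat -> i <> j -> 0 <= q i j) /\
  (forall i, (i < d)%nat -> sumR d (fun j => q i j) = 0).

Fixpoint mpowv (d : nat) (q : mat) (k : nat) (u : vec) : vec :=
  match k with O => u | S k' => mv d q (mpowv d q k' u) end.

Definition expmv (d : nat) (t : R) (q : mat) (u : vec) : vec :=
  fun i => epsilon (inhabits 0)
    (fun l => infinite_sum (fun k => t ^ k / INR (fact k) * mpowv d q k u i) l).

Definition integ (g : R -> R) (a b : R) : R :=
  epsilon (inhabits 0)
    (fun l => exists pr : Riemann_integrable g a b, RiemannInt pr = l).

Definition Rsup (A : R -> Prop) : R := epsilon (inhabits 0) (fun l => is_lub A l).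

Definition Sq (d : nat) (q : mat) (fq : vec) (t : R) (u0 : vec) : vec :=
  fun i => expmv d t q u0 i + integ (fun s => expmv d s q fq i) 0 t.

Definition Ecal (d : nat) (P : mat -> Prop) (f : mat -> vec) (h : R) (u0 : vec) : vec :=
  fun i => Rsup (fun x => exists q, P q /\ x = Sq d q (f q) h u0 i).

(* A finite set pi = {t0 < ... < tm} is represented by its increasing list
   of elements.  pi in P_t: 0 in pi, pi subset [0,oo), max pi = t. *)
Definition partition_of (t : R) (l : list R) : Prop :=
  (exists rest, l = 0 :: rest) /\ Sorted Rlt l /\ last l 0 = t.

Fixpoint Epi_aux (d : nat) (P : mat -> Prop) (f : mat -> vec)
    (tprev : R) (rest : list R) (u : vec) : vec :=
  match rest with
  | nil => u
  | t1 :: rest' => Ecal d P f (t1 - tprev) (Epi_aux d P f t1 rest' u)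
  end.

Definition Epi (d : nat) (P : mat -> Prop) (f : mat -> vec) (l : list R) (u : vec) : vec :=
  match l with
  | nil => u
  | t0 :: nil => Ecal d P f 0 u
  | t0 :: rest => Epi_aux d P f t0 rest u
  end.

Definition Nisio (d : nat) (P : mat -> Prop) (f : mat -> vec) (t : R) (u0 : vec) : vec :=
  fun i => Rsup (fun x => exists l, partition_of t l /\ x = Epi d P f l u0 i).

(* Testing the finiteness of [sup_q (q u + f_q)] on [u = 1 - e_i] and using that [f] is
   bounded, the diagonal entries [- q_ii] are bounded by some [D] uniformly in [q].  Since
   [q + D] has nonnegative entries, [exp (D h) e^{hq} = e^{h (q + D)}] is positive; as
   [e^{hq}] also fixes constants, it is a positive contraction for the sup-norm, and comparison
   with the exponential series gives [|e^{hq} u - u| <= min (2, e^{2Dh} - 1) |u| <= 6Dh |u|].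
   Because [f_q <= 0] and [f_{q0} = 0], [S_q(h) u <= e^{hq} u] with equality for [q0], so [E_h]
   is nonexpansive and moves [u] by at most [6Dh |u|].  Along a partition of [[0, t]] these
   errors add up to [6Dt |u|], and so does their supremum over partitions. *)

From Coquelicot Require Import Coquelicot.
From Stdlib Require Import Reals List Lra Lia Sorting.Sorted ClassicalEpsilon FunctionalExtensionality.
Open Scope R_scope.

Lemma is_series_le (a b : nat -> R) (la lb : R) :
  is_series a la -> is_series b lb -> (forall n, a n <= b n) -> la <= lb.
Proof.
  intros Ha Hb Hab.
  enough (H : Rbar_le la lb) by exact H.
  apply (is_lim_seq_le (sum_n a) (sum_n b)); [|exact Ha|exact Hb].
  intros n; rewrite !sum_n_Reals; apply sum_Rle; auto.
Qed.

Lemma is_series_of_const_sums (a : nat -> R) (c : R) :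
  (forall n, sum_f_R0 a n = c) -> is_series a c.
Proof.
  intros Hc; apply is_series_Reals; intros eps Heps; exists 0%nat; intros n _.
  rewrite Hc; unfold R_dist; rewrite Rminus_diag, Rabs_R0; lra.
Qed.

Lemma is_series_ge0 (a : nat -> R) (l : R) :
  is_series a l -> (forall n, 0 <= a n) -> 0 <= l.
Proof.
  intros Ha Hpos; apply (is_series_le (fun _ => 0) a); auto.
  apply is_series_of_const_sums; induction n; simpl; [|rewrite IHn]; ring.
Qed.

Lemma exp_is_series (x : R) : is_series (fun n => x ^ n / INR (Factorial.fact n)) (exp x).
Proof.
  assert (H := is_exp_Reals x); apply is_pseries_R in H.
  eapply is_series_ext; [|exact H]; intros n; simpl; unfold Rdiv; ring.
Qed.

Lemma exp_sub1_min_le (x : R) : 0 <= x -> Rmin 2 (exp x - 1) <= 3 * x.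
Proof.
  intros Hx; destruct (Rle_lt_dec 1 x) as [Hbig|Hsmall].
  - apply Rle_trans with 2; [apply Rmin_l|lra].
  - apply Rle_trans with (exp x - 1); [apply Rmin_r|].
    (* [1 - x <= exp (- x)] gives [exp x - 1 <= x exp x], and [exp x <= exp 1 <= 3]. *)
    assert (Hinv := exp_ineq1_le (- x)); rewrite exp_Ropp in Hinv.
    assert (Hpos := exp_pos x).
    assert (H1 : exp x * (1 - x) <= 1).
    { apply (Rmult_le_reg_r (/ exp x)); [now apply Rinv_0_lt_compat|].
      replace (exp x * (1 - x) * / exp x) with (1 - x) by (field; lra); lra. }
    assert (H3 : exp x <= 3).
    { apply Rle_trans with (exp 1); [apply Rlt_le, exp_increasing; lra|apply exp_le_3]. }
    nra.
Qed.

Lemma sumR_ext (n : nat) (g h : nat -> R) :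
  (forall j, (j < n)%nat -> g j = h j) -> sumR n g = sumR n h.
Proof. induction n; simpl; intros E; auto. rewrite IHn, E; auto. Qed.

Lemma sumR_lin (n : nat) (g h : nat -> R) (a b : R) :
  sumR n (fun j => a * g j + b * h j) = a * sumR n g + b * sumR n h.
Proof. induction n; simpl; [|rewrite IHn]; ring. Qed.

Lemma sumR_le (n : nat) (g h : nat -> R) :
  (forall j, (j < n)%nat -> g j <= h j) -> sumR n g <= sumR n h.
Proof.
  induction n; simpl; intros Hle; [lra|].
  assert (g n <= h n) by auto.
  enough (sumR n g <= sumR n h) by lra; auto.
Qed.

Lemma Rabs_sumR_le (n : nat) (g : nat -> R) : Rabs (sumR n g) <= sumR n (fun j => Rabs (g j)).
Proof.
  induction n; simpl; [rewrite Rabs_R0; lra|].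
  eapply Rle_trans; [apply Rabs_triang|lra].
Qed.

Lemma sumR_0 (n : nat) : sumR n (fun _ => 0) = 0.
Proof. induction n; simpl; [|rewrite IHn]; ring. Qed.

Lemma sumR_delta (n i : nat) (c : R) :
  (i < n)%nat -> sumR n (fun j => if Nat.eq_dec j i then c else 0) = c.
Proof.
  induction n; intros Hi; [lia|]; simpl.
  destruct (Nat.eq_dec n i) as [->|Hne]; [|rewrite IHn; [ring|lia]].
  rewrite (sumR_ext _ _ (fun _ => 0)), sumR_0; [ring|].
  intros j Hj; destruct (Nat.eq_dec j i); [lia|auto].
Qed.

Lemma sumR_sum_f_R0 (n m : nat) (g : nat -> nat -> R) :
  sumR n (fun j => sum_f_R0 (fun k => g k j) m) = sum_f_R0 (fun k => sumR n (g k)) m.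
Proof.
  induction m; simpl; [reflexivity|].
  rewrite <- IHm, <- (Rmult_1_l (sumR n (fun j => sum_f_R0 _ m))),
    <- (Rmult_1_l (sumR n (g (S m)))), <- sumR_lin.
  apply sumR_ext; intros; ring.
Qed.

Lemma norm_inf_ge0 (d : nat) (u : vec) : 0 <= norm_inf d u.
Proof.
  unfold norm_inf; induction d; simpl; [lra|].
  eapply Rle_trans; [exact IHd|apply Rmax_l].
Qed.

Lemma Rabs_le_norm_inf (d i : nat) (u : vec) : (i < d)%nat -> Rabs (u i) <= norm_inf d u.
Proof.
  unfold norm_inf; induction d; intros Hi; [lia|]; simpl.
  destruct (Nat.eq_dec i d) as [->|Hne]; [apply Rmax_r|].
  eapply Rle_trans; [apply IHd; lia|apply Rmax_l].
Qed.

Lemma norm_inf_le (d : nat) (u : vec) (c : R) :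
  0 <= c -> (forall i, (i < d)%nat -> Rabs (u i) <= c) -> norm_inf d u <= c.
Proof.
  unfold norm_inf; induction d; intros Hc Hu; simpl; [lra|].
  apply Rmax_lub; auto.
Qed.

Lemma mv_ext (d : nat) (q : mat) (u v : vec) (i : nat) :
  (forall j, (j < d)%nat -> u j = v j) -> mv d q u i = mv d q v i.
Proof. intros E; apply sumR_ext; intros j Hj; rewrite E; auto. Qed.

Lemma mv_lin (d : nat) (q : mat) (u v : vec) (a b : R) (i : nat) :
  mv d q (fun j => a * u j + b * v j) i = a * mv d q u i + b * mv d q v i.
Proof. unfold mv; rewrite <- sumR_lin; apply sumR_ext; intros; ring. Qed.

Lemma mv_scal (d : nat) (q : mat) (u : vec) (c : R) (i : nat) :
  mv d q (fun j => c * u j) i = c * mv d q u i.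
Proof. unfold mv; rewrite <- (Rplus_0_r (c * _)), <- (Rmult_0_l (sumR d u)), <- sumR_lin.
  apply sumR_ext; intros; ring. Qed.

Lemma mv_sum_f_R0 (d : nat) (q : mat) (g : nat -> vec) (n i : nat) :
  mv d q (fun j => sum_f_R0 (fun k => g k j) n) i = sum_f_R0 (fun k => mv d q (g k) i) n.
Proof.
  unfold mv; rewrite <- sumR_sum_f_R0; apply sumR_ext; intros j _.
  rewrite scal_sum; apply sum_eq; intros; ring.
Qed.

Lemma mpowv_ext (d : nat) (q : mat) (k : nat) (u v : vec) (i : nat) :
  (forall j, (j < d)%nat -> u j = v j) -> (i < d)%nat -> mpowv d q k u i = mpowv d q k v i.
Proof.
  intros E; revert i; induction k; intros i Hi; simpl; auto.
  apply mv_ext; auto.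
Qed.

Lemma mpowv_lin (d : nat) (q : mat) (k : nat) (u v : vec) (a b : R) (i : nat) :
  mpowv d q k (fun j => a * u j + b * v j) i = a * mpowv d q k u i + b * mpowv d q k v i.
Proof.
  revert i; induction k; intros i; simpl; auto.
  rewrite <- mv_lin; apply mv_ext; intros; apply IHk.
Qed.

Lemma C_n_n (n : nat) : C n n = 1.
Proof. unfold C; rewrite Nat.sub_diag; simpl; field; apply Rgt_not_eq, INR_fact_lt_0. Qed.

Lemma sum_binomial_S (X v : nat -> R) (n : nat) :
  sum_f_R0 (fun k => C (S n) k * X k * v (S n - k)%nat) (S n) =
  sum_f_R0 (fun k => C n k * X k * v (S n - k)%nat) n +
  sum_f_R0 (fun k => C n k * X (S k) * v (n - k)%nat) n.
Proof.
  destruct n as [|m]; [simpl; rewrite !C_n_0, C_n_n; ring|].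
  rewrite (decomp_sum _ (S (S m))) by lia; simpl pred; rewrite tech5.
  rewrite (decomp_sum (fun k => C (S m) k * X k * v (S (S m) - k)%nat) (S m)) by lia.
  simpl pred; rewrite tech5.
  rewrite (sum_eq (fun k => C (S (S m)) (S k) * X (S k) * v (S (S m) - S k)%nat)
             (fun k => C (S m) k * X (S k) * v (S m - k)%nat
                       + C (S m) (S k) * X (S k) * v (S m - k)%nat)).
  - rewrite sum_plus, !C_n_0, !C_n_n, !Nat.sub_diag; simpl Nat.sub; ring.
  - intros k Hk; rewrite <- pascal by lia; simpl Nat.sub; ring.
Qed.

Lemma integ_RiemannInt (g : R -> R) (a b : R) (pr : Riemann_integrable g a b) :
  integ g a b = RiemannInt pr.
Proof.
  unfold integ.
  assert (Hspec : exists pr' : Riemann_integrable g a b, RiemannInt pr' =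
      epsilon (inhabits 0) (fun l => exists pr0 : Riemann_integrable g a b, RiemannInt pr0 = l))
    by (apply epsilon_spec; exists (RiemannInt pr), pr; reflexivity).
  destruct Hspec as [pr' <-]; apply RiemannInt_P5.
Qed.

Lemma Rsup_is_lub (A : R -> Prop) : bound A -> (exists x, A x) -> is_lub A (Rsup A).
Proof.
  intros Hb Hne; destruct (completeness A Hb Hne) as [m Hm].
  unfold Rsup; apply epsilon_spec; eauto.
Qed.

Lemma Rabs_Rsup_sub_le (A : R -> Prop) (a e : R) :
  (forall x, A x -> x <= a + e) -> (exists x, A x /\ a - e <= x) -> Rabs (Rsup A - a) <= e.
Proof.
  intros Hup [x [Hx Hlo]].
  destruct (Rsup_is_lub A) as [Hub Hleast]; [exists (a + e); exact Hup|eauto|].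
  assert (x <= Rsup A) by auto; assert (Rsup A <= a + e) by (apply Hleast; exact Hup).
  apply Rabs_le; lra.
Qed.

Lemma last_cons (a : R) (l : list R) (x : R) : last (a :: l) x = last l a.
Proof.
  revert a x; induction l as [|b l IH]; intros a x; [reflexivity|].
  change (last (b :: l) x = last (b :: l) a); rewrite IH, IH; reflexivity.
Qed.

Lemma Sorted_le_last (a : R) (l : list R) : Sorted Rlt (a :: l) -> a <= last l a.
Proof.
  revert a; induction l as [|b l IH]; intros a Hs; [simpl; lra|].
  apply Sorted_inv in Hs; destruct Hs as [Hs Hab]; apply HdRel_inv in Hab.
  rewrite last_cons; specialize (IH b Hs); lra.
Qed.

Definition expmv_term (d : nat) (q : mat) (h : R) (u : vec) (i k : nat) : R :=
  h ^ k / INR (Factorial.fact k) * mpowv d q k u i.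

Section Generator.
Variables (d : nat) (q : mat) (D : R).
Hypothesis Hq : is_Qmatrix d q.
Hypothesis HD : forall i, (i < d)%nat -> - q i i <= D.
Hypothesis HD0 : 0 <= D.

Lemma sumR_abs_row (i : nat) : (i < d)%nat -> sumR d (fun j => Rabs (q i j)) = - 2 * q i i.
Proof.
  intros Hi; destruct Hq as [Hdiag [Hoff Hrow]].
  rewrite (sumR_ext _ _ (fun j => 1 * q i j + 1 * (if Nat.eq_dec j i then - 2 * q i i else 0))).
  - rewrite sumR_lin, Hrow, sumR_delta; auto; ring.
  - intros j Hj; destruct (Nat.eq_dec j i) as [->|Hne].
    + rewrite Rabs_left1; [ring|auto].
    + rewrite Rabs_right; [ring|apply Rle_ge; auto].
Qed.

Lemma mv_compl_unit (i : nat) : (i < d)%nat ->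
  mv d q (fun j => if Nat.eq_dec j i then 0 else 1) i = - q i i.
Proof.
  intros Hi; destruct Hq as [_ [_ Hrow]]; unfold mv.
  rewrite (sumR_ext _ _ (fun j => 1 * q i j + 1 * (if Nat.eq_dec j i then - q i i else 0))).
  - rewrite sumR_lin, Hrow, sumR_delta; auto; ring.
  - intros j Hj; destruct (Nat.eq_dec j i) as [->|Hne]; ring.
Qed.

Lemma Rabs_mv_le (u : vec) (i : nat) :
  (i < d)%nat -> Rabs (mv d q u i) <= 2 * D * norm_inf d u.
Proof.
  intros Hi; eapply Rle_trans; [apply Rabs_sumR_le|].
  apply Rle_trans with (sumR d (fun j => norm_inf d u * Rabs (q i j) + 0 * 0)).
  - apply sumR_le; intros j Hj; rewrite Rabs_mult, Rmult_comm.
    assert (Rabs (u j) <= norm_inf d u) by now apply Rabs_le_norm_inf.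
    assert (0 <= Rabs (q i j)) by apply Rabs_pos.
    nra.
  - rewrite sumR_lin, sumR_abs_row by auto.
    assert (0 <= norm_inf d u) by apply norm_inf_ge0.
    specialize (HD i Hi); nra.
Qed.

Lemma norm_inf_mpowv_le (k : nat) (u : vec) :
  norm_inf d (mpowv d q k u) <= (2 * D) ^ k * norm_inf d u.
Proof.
  assert (Hu := norm_inf_ge0 d u).
  induction k; simpl; [lra|].
  apply norm_inf_le; [apply Rmult_le_pos; [|lra]; apply Rmult_le_pos, pow_le; lra|].
  intros i Hi; eapply Rle_trans; [apply Rabs_mv_le; auto|].
  apply Rle_trans with (2 * D * ((2 * D) ^ k * norm_inf d u)); [|right; ring].
  apply Rmult_le_compat_l; lra.
Qed.

Lemma Rabs_mpowv_le (k : nat) (u : vec) (i : nat) :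
  (i < d)%nat -> Rabs (mpowv d q k u i) <= (2 * D) ^ k * norm_inf d u.
Proof. intros Hi; eapply Rle_trans; [apply Rabs_le_norm_inf, Hi|apply norm_inf_mpowv_le]. Qed.

Lemma mpowv_S_const (k : nat) (c : R) (i : nat) :
  (i < d)%nat -> mpowv d q (S k) (fun _ => c) i = 0.
Proof.
  destruct Hq as [_ [_ Hrow]].
  revert i; induction k; intros i Hi; simpl.
  - unfold mv; rewrite (sumR_ext _ _ (fun j => c * q i j + 0 * 0)) by (intros; ring).
    rewrite sumR_lin, Hrow; auto; ring.
  - rewrite (mv_ext _ _ _ (fun _ => 0)) by auto.
    unfold mv; rewrite (sumR_ext _ _ (fun _ => 0)) by (intros; ring); apply sumR_0.
Qed.

Lemma Rabs_expmv_term_le (h : R) (u : vec) (i k : nat) : (i < d)%nat ->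
  Rabs (expmv_term d q h u i k) <= norm_inf d u * ((2 * D * Rabs h) ^ k / INR (Factorial.fact k)).
Proof.
  intros Hi; unfold expmv_term, Rdiv.
  assert (Hf : 0 < / INR (Factorial.fact k)) by apply Rinv_0_lt_compat, INR_fact_lt_0.
  rewrite !Rabs_mult, <- RPow_abs, (Rabs_right (/ _)), Rpow_mult_distr by lra.
  assert (Hm := Rabs_mpowv_le k u i Hi).
  assert (0 <= Rabs h ^ k) by apply pow_le, Rabs_pos.
  replace (norm_inf d u * ((2 * D) ^ k * Rabs h ^ k * / INR (Factorial.fact k)))
    with (Rabs h ^ k * / INR (Factorial.fact k) * ((2 * D) ^ k * norm_inf d u)) by ring.
  apply Rmult_le_compat_l; [apply Rmult_le_pos|]; lra.
Qed.

Lemma ex_series_Rabs_expmv_term (h : R) (u : vec) (i : nat) : (i < d)%nat ->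
  ex_series (fun k => Rabs (expmv_term d q h u i k)).
Proof.
  intros Hi.
  apply (@ex_series_le R_AbsRing R_CompleteNormedModule _
    (fun k => norm_inf d u * ((2 * D * Rabs h) ^ k / INR (Factorial.fact k)))).
  - intros k; change (Rabs (Rabs (expmv_term d q h u i k)) <=
      norm_inf d u * ((2 * D * Rabs h) ^ k / INR (Factorial.fact k))).
    rewrite Rabs_Rabsolu; now apply Rabs_expmv_term_le.
  - eexists; apply (is_series_scal (norm_inf d u) _ _ (exp_is_series _)).
Qed.

Lemma expmv_is_series (h : R) (u : vec) (i : nat) : (i < d)%nat ->
  is_series (expmv_term d q h u i) (expmv d h q u i).
Proof.
  intros Hi; destruct (ex_series_Rabs _ (ex_series_Rabs_expmv_term h u i Hi)) as [l Hl].
  apply is_series_Reals; unfold expmv; apply epsilon_spec.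
  exists l; now apply is_series_Reals.
Qed.

Lemma expmv_lin (h : R) (u v : vec) (a b : R) (i : nat) : (i < d)%nat ->
  expmv d h q (fun j => a * u j + b * v j) i = a * expmv d h q u i + b * expmv d h q v i.
Proof.
  intros Hi; rewrite <- (is_series_unique _ _ (expmv_is_series h _ i Hi)).
  apply is_series_unique.
  assert (Hu := is_series_scal a _ _ (expmv_is_series h u i Hi)).
  assert (Hv := is_series_scal b _ _ (expmv_is_series h v i Hi)).
  eapply is_series_ext; [|exact (is_series_plus _ _ _ _ Hu Hv)].
  intros k; unfold expmv_term; rewrite mpowv_lin; cbn; ring.
Qed.

Lemma expmv_ext (h : R) (u v : vec) (i : nat) : (i < d)%nat ->
  (forall j, (j < d)%nat -> u j = v j) -> expmv d h q u i = expmv d h q v i.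
Proof.
  intros Hi E; rewrite <- (is_series_unique _ _ (expmv_is_series h u i Hi)).
  apply is_series_unique; eapply is_series_ext; [|apply expmv_is_series, Hi].
  intros k; unfold expmv_term; rewrite (mpowv_ext d q k u v); auto.
Qed.

Lemma expmv_const (h c : R) (i : nat) : (i < d)%nat -> expmv d h q (fun _ => c) i = c.
Proof.
  intros Hi; rewrite <- (is_series_unique _ _ (expmv_is_series h _ i Hi)).
  apply is_series_unique, is_series_of_const_sums.
  induction n; simpl.
  - unfold expmv_term; simpl; field.
  - rewrite IHn; unfold expmv_term; rewrite mpowv_S_const by auto; ring.
Qed.

Lemma Rabs_expmv_sub_le (h : R) (u : vec) (i : nat) : (i < d)%nat ->
  Rabs (expmv d h q u i - u i) <= norm_inf d u * (exp (2 * D * Rabs h) - 1).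
Proof.
  intros Hi; set (x := 2 * D * Rabs h).
  assert (Hs : is_series (fun k => expmv_term d q h u i (S k)) (expmv d h q u i - u i)).
  { apply is_series_incr_1.
    replace (plus _ _) with (expmv d h q u i) by (unfold expmv_term, plus; simpl; field).
    now apply expmv_is_series. }
  assert (Hb : is_series (fun k => norm_inf d u * (x ^ S k / INR (Factorial.fact (S k))))
                 (norm_inf d u * (exp x - 1))).
  { apply (is_series_scal (norm_inf d u) (fun k => x ^ S k / INR (Factorial.fact (S k)))).
    apply (is_series_incr_1 (fun k => x ^ k / INR (Factorial.fact k))).
    replace (plus _ _) with (exp x) by (unfold plus; simpl; field).
    apply exp_is_series. }
  assert (Hterm : forall k, Rabs (expmv_term d q h u i (S k))
                    <= norm_inf d u * (x ^ S k / INR (Factorial.fact (S k))))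
    by (intros; now apply Rabs_expmv_term_le).
  apply Rabs_le; split.
  - apply Ropp_le_cancel; rewrite Ropp_involutive.
    apply (is_series_le _ _ _ _ (is_series_opp _ _ Hs) Hb).
    intros k; specialize (Hterm k); apply Rabs_le_between in Hterm.
    change (opp ?a) with (- a); lra.
  - apply (is_series_le _ _ _ _ Hs Hb).
    intros k; specialize (Hterm k); apply Rabs_le_between in Hterm; lra.
Qed.

(* [mpowv_shift n u] is the binomial expansion of [(q + D)^n u]. *)
Definition mpowv_shift (n : nat) (u : vec) (i : nat) : R :=
  sum_f_R0 (fun k => C n k * D ^ k * mpowv d q (n - k) u i) n.

Lemma mpowv_shift_S (n : nat) (u : vec) (i : nat) :
  mpowv_shift (S n) u i = mv d q (mpowv_shift n u) i + D * mpowv_shift n u i.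
Proof.
  unfold mpowv_shift at 1; rewrite (sum_binomial_S (fun k => D ^ k) (fun m => mpowv d q m u i)).
  unfold mpowv_shift; rewrite mv_sum_f_R0, scal_sum; f_equal; apply sum_eq; intros k Hk.
  - rewrite mv_scal; replace (S n - k)%nat with (S (n - k)) by lia; reflexivity.
  - simpl; ring.
Qed.

Lemma mpowv_shift_ge0 (u : vec) : (forall j, (j < d)%nat -> 0 <= u j) ->
  forall n i, (i < d)%nat -> 0 <= mpowv_shift n u i.
Proof.
  destruct Hq as [_ [Hoff _]]; intros Hu n; induction n; intros i Hi.
  - unfold mpowv_shift; simpl; rewrite C_n_0; specialize (Hu i Hi); lra.
  - rewrite mpowv_shift_S.
    replace (mv d q (mpowv_shift n u) i + D * mpowv_shift n u i) with
      (sumR d (fun j => 1 * (q i j * mpowv_shift n u j)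
                        + 1 * (if Nat.eq_dec j i then D * mpowv_shift n u i else 0)))
      by (rewrite sumR_lin, sumR_delta by auto; unfold mv; ring).
    apply Rle_trans with (sumR d (fun _ => 0)); [rewrite sumR_0; lra|].
    apply sumR_le; intros j Hj.
    destruct (Nat.eq_dec j i) as [->|Hne].
    + specialize (HD i Hi); specialize (IHn i Hi); nra.
    + assert (0 <= q i j) by auto; specialize (IHn j Hj); nra.
Qed.

(* [exp (D h) e^{hq} u = e^{h (q + D)} u] as a Cauchy product of series. *)
Lemma expmv_ge0 (h : R) (u : vec) (i : nat) : 0 <= h -> (i < d)%nat ->
  (forall j, (j < d)%nat -> 0 <= u j) -> 0 <= expmv d h q u i.
Proof.
  intros Hh Hi Hu.
  assert (Hfact : forall n, 0 < / INR (Factorial.fact n))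
    by (intros; apply Rinv_0_lt_compat, INR_fact_lt_0).
  assert (Hprod := is_series_mult _ _ _ _ (exp_is_series (D * h)) (expmv_is_series h u i Hi)).
  enough (0 <= exp (D * h) * expmv d h q u i) by (assert (0 < exp (D * h)) by apply exp_pos; nra).
  eapply is_series_ge0; [apply Hprod|..].
  - eexists; eapply is_series_ext; [|apply (exp_is_series (D * h))].
    intros n; rewrite Rabs_right; [reflexivity|].
    apply Rle_ge, Rmult_le_pos; [apply pow_le; nra|apply Rlt_le, Hfact].
  - apply ex_series_Rabs_expmv_term, Hi.
  - intros n; cbv beta.
    rewrite (sum_eq _ (fun k => C n k * D ^ k * mpowv d q (n - k) u i * (h ^ n / INR (Factorial.fact n)))).
    + rewrite <- scal_sum; apply Rmult_le_pos.
      * apply Rmult_le_pos; [apply pow_le; lra|apply Rlt_le, Hfact].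
      * apply mpowv_shift_ge0; auto.
    + intros k Hk; unfold expmv_term, C.
      replace (h ^ n) with (h ^ k * h ^ (n - k)) by (rewrite <- pow_add; f_equal; lia).
      rewrite Rpow_mult_distr; field.
      split; [|split]; apply Rgt_not_eq, INR_fact_lt_0.
Qed.

Lemma Rabs_expmv_le (h : R) (u : vec) (i : nat) : 0 <= h -> (i < d)%nat ->
  Rabs (expmv d h q u i) <= norm_inf d u.
Proof.
  intros Hh Hi; set (c := norm_inf d u).
  assert (Hu : forall j, (j < d)%nat -> - c <= u j <= c)
    by (intros; apply Rabs_le_between, Rabs_le_norm_inf; auto).
  assert (Hlo := expmv_ge0 h (fun j => 1 * c + 1 * u j) i Hh Hi).
  assert (Hup := expmv_ge0 h (fun j => 1 * c + -1 * u j) i Hh Hi).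
  rewrite expmv_lin, expmv_const in Hlo, Hup by auto.
  apply Rabs_le; split.
  - enough (0 <= 1 * c + 1 * expmv d h q u i) by lra.
    apply Hlo; intros j Hj; specialize (Hu j Hj); lra.
  - enough (0 <= 1 * c + -1 * expmv d h q u i) by lra.
    apply Hup; intros j Hj; specialize (Hu j Hj); lra.
Qed.

Lemma expmv_continuity_pt (u : vec) (i : nat) (s : R) : (i < d)%nat ->
  continuity_pt (fun h => expmv d h q u i) s.
Proof.
  intros Hi; set (a := fun k => mpowv d q k u i / INR (Factorial.fact k)).
  assert (Hterm : forall h k, expmv_term d q h u i k = a k * h ^ k)
    by (intros; unfold expmv_term, a, Rdiv; ring).
  replace (fun h => expmv d h q u i) with (PSeries a).
  2: { apply functional_extensionality; intros h; apply is_pseries_unique, is_pseries_R.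
       eapply is_series_ext; [|apply expmv_is_series, Hi]; intros k; apply Hterm. }
  apply PSeries_continuity.
  destruct (Rbar_lt_dec (Rabs s) (CV_radius a)) as [Hlt|Hge]; [exact Hlt|exfalso].
  set (r := Rabs s + 1).
  (* [a k r^k] is summable, hence tends to 0, so [r] lies inside the radius. *)
  apply (CV_disk_outside a r).
  - eapply Rbar_le_lt_trans; [apply Rbar_not_lt_le, Hge|].
    assert (0 <= Rabs s) by apply Rabs_pos.
    unfold r; rewrite (Rabs_right (Rabs s + 1)) by lra; simpl; lra.
  - apply is_lim_seq_abs_0, ex_series_lim_0.
    eapply ex_series_ext; [|apply (ex_series_Rabs_expmv_term r u i Hi)].
    intros k; cbv beta; now rewrite Hterm.
Qed.

Lemma integ_expmv_le0 (u : vec) (i : nat) (h : R) : (i < d)%nat -> 0 <= h ->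
  (forall j, (j < d)%nat -> u j <= 0) -> integ (fun s => expmv d s q u i) 0 h <= 0.
Proof.
  intros Hi Hh Hu.
  assert (pr : Riemann_integrable (fun s => expmv d s q u i) 0 h)
    by (apply continuity_implies_RiemannInt; auto; intros; apply expmv_continuity_pt, Hi).
  rewrite (integ_RiemannInt _ _ _ pr).
  apply Rle_trans with (RiemannInt (RiemannInt_P14 0 h 0)); [|rewrite RiemannInt_P15; lra].
  apply RiemannInt_P19; auto; intros s Hs; unfold fct_cte.
  assert (Hneg := expmv_ge0 s (fun j => -1 * u j + 0 * u j) i ltac:(lra) Hi).
  rewrite expmv_lin in Hneg by auto.
  enough (0 <= -1 * expmv d s q u i + 0 * expmv d s q u i) by lra.
  apply Hneg; intros j Hj; specialize (Hu j Hj); lra.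
Qed.

Lemma integ_expmv_0 (u : vec) (i : nat) (h : R) : (i < d)%nat ->
  (forall j, (j < d)%nat -> u j = 0) -> integ (fun s => expmv d s q u i) 0 h = 0.
Proof.
  intros Hi Hu.
  replace (fun s => expmv d s q u i) with (fct_cte 0).
  - rewrite (integ_RiemannInt _ _ _ (RiemannInt_P14 0 h 0)), RiemannInt_P15; ring.
  - apply functional_extensionality; intros s; unfold fct_cte.
    rewrite (expmv_ext s u (fun _ => 0)), expmv_const; auto.
Qed.

Lemma Rabs_expmv_sub_le_lin (h : R) (u : vec) (i : nat) : 0 <= h -> (i < d)%nat ->
  Rabs (expmv d h q u i - u i) <= 6 * D * h * norm_inf d u.
Proof.
  intros Hh Hi.
  assert (Hexp := Rabs_expmv_sub_le h u i Hi); rewrite (Rabs_right h) in Hexp by lra.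
  assert (Htwo : Rabs (expmv d h q u i - u i) <= norm_inf d u * 2).
  { eapply Rle_trans; [apply Rabs_triang|]; rewrite Rabs_Ropp.
    assert (Rabs (expmv d h q u i) <= norm_inf d u) by now apply Rabs_expmv_le.
    assert (Rabs (u i) <= norm_inf d u) by now apply Rabs_le_norm_inf.
    lra. }
  assert (Hmin : Rmin 2 (exp (2 * D * h) - 1) <= 3 * (2 * D * h))
    by (apply exp_sub1_min_le, Rmult_le_pos; lra).
  assert (Hu := norm_inf_ge0 d u).
  apply Rle_trans with (norm_inf d u * Rmin 2 (exp (2 * D * h) - 1)).
  - unfold Rmin; destruct Rle_dec; assumption.
  - apply Rle_trans with (norm_inf d u * (3 * (2 * D * h))); [|right; ring].
    apply Rmult_le_compat_l; assumption.
Qed.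

End Generator.

Section Nisio.
Variables (d : nat) (P : mat -> Prop) (f : mat -> vec) (q0 : mat) (D : R).
Hypothesis HQ : forall q, P q -> is_Qmatrix d q.
Hypothesis Hq0 : P q0.
Hypothesis Hf0 : forall i, (i < d)%nat -> f q0 i = 0.
Hypothesis Hf_le0 : forall q, P q -> forall i, (i < d)%nat -> f q i <= 0.
Hypothesis HD : forall q, P q -> forall i, (i < d)%nat -> - q i i <= D.
Hypothesis HD0 : 0 <= D.

Lemma Sq_le_expmv (q : mat) (h : R) (u : vec) (i : nat) : P q -> 0 <= h -> (i < d)%nat ->
  Sq d q (f q) h u i <= expmv d h q u i.
Proof.
  intros Hq Hh Hi; unfold Sq.
  enough (integ (fun s => expmv d s q (f q) i) 0 h <= 0) by lra.
  apply (integ_expmv_le0 d q D); auto.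
Qed.

Lemma Sq_q0 (h : R) (u : vec) (i : nat) : (i < d)%nat -> Sq d q0 (f q0) h u i = expmv d h q0 u i.
Proof. intros Hi; unfold Sq; rewrite (integ_expmv_0 d q0 D); auto; ring. Qed.

Lemma Sq_le_add (q : mat) (h : R) (u v : vec) (i : nat) (N : R) :
  P q -> 0 <= h -> (i < d)%nat -> 0 <= N ->
  (forall j, (j < d)%nat -> Rabs (u j - v j) <= N) -> Sq d q (f q) h u i <= Sq d q (f q) h v i + N.
Proof.
  intros Hq Hh Hi HN Huv; unfold Sq.
  assert (Hc := Rabs_expmv_le d q D (HQ q Hq) (HD q Hq) HD0 h (fun j => 1 * u j + -1 * v j) i Hh Hi).
  rewrite (expmv_lin d q D) in Hc by auto.
  assert (norm_inf d (fun j => 1 * u j + -1 * v j) <= N).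
  { apply norm_inf_le; auto; intros j Hj.
    replace (1 * u j + -1 * v j) with (u j - v j) by ring; auto. }
  apply Rabs_le_between in Hc; lra.
Qed.

Lemma Ecal_is_lub (h : R) (u : vec) (i : nat) : 0 <= h -> (i < d)%nat ->
  is_lub (fun x => exists q, P q /\ x = Sq d q (f q) h u i) (Ecal d P f h u i).
Proof.
  intros Hh Hi; apply Rsup_is_lub; [|eauto].
  exists (norm_inf d u); intros x [q [Hq ->]].
  eapply Rle_trans; [apply Sq_le_expmv; auto|].
  eapply Rle_trans; [apply Rle_abs|apply (Rabs_expmv_le d q D); auto].
Qed.

Lemma Rabs_Ecal_sub_le (h : R) (u : vec) (i : nat) : 0 <= h -> (i < d)%nat ->
  Rabs (Ecal d P f h u i - u i) <= 6 * D * h * norm_inf d u.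
Proof.
  intros Hh Hi; apply Rabs_Rsup_sub_le.
  - intros x [q [Hq ->]].
    assert (Hx := Rabs_expmv_sub_le_lin d q D (HQ q Hq) (HD q Hq) HD0 h u i Hh Hi).
    assert (Sq d q (f q) h u i <= expmv d h q u i) by now apply Sq_le_expmv.
    apply Rabs_le_between in Hx; lra.
  - exists (Sq d q0 (f q0) h u i); split; [eauto|].
    assert (Hx := Rabs_expmv_sub_le_lin d q0 D (HQ q0 Hq0) (HD q0 Hq0) HD0 h u i Hh Hi).
    rewrite Sq_q0 by auto; apply Rabs_le_between in Hx; lra.
Qed.

Lemma Ecal_le_add (h : R) (u v : vec) (i : nat) (N : R) : 0 <= h -> (i < d)%nat -> 0 <= N ->
  (forall j, (j < d)%nat -> Rabs (u j - v j) <= N) -> Ecal d P f h u i <= Ecal d P f h v i + N.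
Proof.
  intros Hh Hi HN Huv.
  destruct (Ecal_is_lub h u i Hh Hi) as [_ Hleast]; destruct (Ecal_is_lub h v i Hh Hi) as [Hub _].
  enough (Ecal d P f h u i <= Ecal d P f h v i + N) by lra.
  apply Hleast; intros x [q [Hq ->]].
  assert (Sq d q (f q) h v i <= Ecal d P f h v i) by (apply Hub; eauto).
  assert (Sq d q (f q) h u i <= Sq d q (f q) h v i + N) by (apply Sq_le_add; auto).
  lra.
Qed.

(* Errors add up along the partition because [Ecal] is nonexpansive. *)
Lemma Rabs_Epi_aux_sub_le (rest : list R) : forall (tprev : R) (u : vec) (i : nat),
  Sorted Rlt (tprev :: rest) -> (i < d)%nat ->
  Rabs (Epi_aux d P f tprev rest u i - u i) <= 6 * D * (last rest tprev - tprev) * norm_inf d u.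
Proof.
  induction rest as [|t1 rest IH]; intros tprev u i Hs Hi.
  - simpl; rewrite Rminus_diag, Rabs_R0; lra.
  - simpl Epi_aux; rewrite last_cons.
    apply Sorted_inv in Hs; destruct Hs as [Hs Ht1]; apply HdRel_inv in Ht1.
    assert (Hlast := Sorted_le_last t1 rest Hs).
    set (w := Epi_aux d P f t1 rest u).
    set (N := 6 * D * (last rest t1 - t1) * norm_inf d u).
    assert (HN : 0 <= N).
    { assert (0 <= norm_inf d u) by apply norm_inf_ge0.
      apply Rmult_le_pos; [apply Rmult_le_pos|]; lra. }
    assert (Hwu : forall j, (j < d)%nat -> Rabs (w j - u j) <= N) by (intros; apply IH; auto).
    assert (Huw : forall j, (j < d)%nat -> Rabs (u j - w j) <= N)
      by (intros; rewrite Rabs_minus_sym; auto).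
    assert (Hwu' := Ecal_le_add (t1 - tprev) w u i N ltac:(lra) Hi HN Hwu).
    assert (Huw' := Ecal_le_add (t1 - tprev) u w i N ltac:(lra) Hi HN Huw).
    assert (Hstep := Rabs_Ecal_sub_le (t1 - tprev) u i ltac:(lra) Hi).
    apply Rabs_le_between in Hstep; apply Rabs_le.
    replace (6 * D * (last rest t1 - tprev) * norm_inf d u)
      with (N + 6 * D * (t1 - tprev) * norm_inf d u) by (unfold N; ring).
    lra.
Qed.

Lemma Rabs_Epi_sub_le (t : R) (l : list R) (u : vec) (i : nat) : partition_of t l -> (i < d)%nat ->
  Rabs (Epi d P f l u i - u i) <= 6 * D * t * norm_inf d u.
Proof.
  intros [[rest ->] [Hs <-]] Hi.
  destruct rest as [|t1 rest]; [apply Rabs_Ecal_sub_le; simpl; auto; lra|].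
  unfold Epi; rewrite last_cons, <- (Rminus_0_r (last _ 0)).
  apply Rabs_Epi_aux_sub_le; auto.
Qed.

Lemma partition_of_exists (t : R) : 0 <= t -> exists l, partition_of t l.
Proof.
  intros Ht; destruct (Rle_lt_or_eq_dec 0 t Ht) as [Hpos|<-].
  - exists (0 :: t :: nil); repeat split; [eauto|repeat constructor; auto].
  - exists (0 :: nil); repeat split; [eauto|repeat constructor].
Qed.

Lemma Rabs_Nisio_sub_le (t : R) (u : vec) (i : nat) : 0 <= t -> (i < d)%nat ->
  Rabs (Nisio d P f t u i - u i) <= 6 * D * t * norm_inf d u.
Proof.
  intros Ht Hi; apply Rabs_Rsup_sub_le.
  - intros x [l [Hl ->]]; assert (H := Rabs_Epi_sub_le t l u i Hl Hi).
    apply Rabs_le_between in H; lra.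
  - destruct (partition_of_exists t Ht) as [l Hl].
    exists (Epi d P f l u i); split; [eauto|].
    assert (H := Rabs_Epi_sub_le t l u i Hl Hi); apply Rabs_le_between in H; lra.
Qed.

End Nisio.

Lemma uniform_bound_fin {A : Type} (P : A -> Prop) (g : A -> nat -> R) (n : nat) :
  (forall i, (i < n)%nat -> exists m, forall a, P a -> g a i <= m) ->
  exists B, 0 <= B /\ forall a, P a -> forall i, (i < n)%nat -> g a i <= B.
Proof.
  induction n as [|n IH]; intros Hrow; [exists 0; split; [lra|intros; lia]|].
  destruct IH as [B [HB0 HB]]; [intros; apply Hrow; lia|].
  destruct (Hrow n ltac:(lia)) as [m Hm].
  exists (Rmax B m); split; [eapply Rle_trans; [exact HB0|apply Rmax_l]|].
  intros a Ha i Hi; destruct (Nat.eq_dec i n) as [->|Hne].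
  - eapply Rle_trans; [apply Hm, Ha|apply Rmax_r].
  - eapply Rle_trans; [apply HB; auto; lia|apply Rmax_l].
Qed.

Lemma diag_uniform_bound (d : nat) (P : mat -> Prop) (f : mat -> vec)
  (HQ : forall q, P q -> is_Qmatrix d q)
  (Hfin : forall (u : vec) i, (i < d)%nat ->
            bound (fun x => exists q, P q /\ x = mv d q u i + f q i))
  (Hfbdd : exists C, forall q, P q -> norm_inf d (f q) <= C) :
  exists D, 0 <= D /\ forall q, P q -> forall i, (i < d)%nat -> - q i i <= D.
Proof.
  destruct Hfbdd as [C HC].
  apply (uniform_bound_fin P (fun q i => - q i i)); intros i Hi.
  destruct (Hfin (fun j => if Nat.eq_dec j i then 0 else 1) i Hi) as [m Hm].
  exists (m + C); intros q Hq.
  assert (Hle : mv d q (fun j => if Nat.eq_dec j i then 0 else 1) i + f q i <= m)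
    by (apply Hm; eauto).
  rewrite mv_compl_unit in Hle by auto.
  assert (Hf : Rabs (f q i) <= C) by (eapply Rle_trans; [apply Rabs_le_norm_inf, Hi|auto]).
  apply Rabs_le_between in Hf; lra.
Qed.

Theorem mainTheorem13 (d : nat) (P : mat -> Prop) (f : mat -> vec) (q0 : mat)
  (HQ : forall q, P q -> is_Qmatrix d q)
  (Hq0 : P q0)
  (Hf0 : forall i, (i < d)%nat -> f q0 i = 0)
  (Hsupf : forall i, (i < d)%nat -> is_lub (fun x => exists q, P q /\ x = f q i) 0)
  (Hfin : forall (u : vec) i, (i < d)%nat ->
            bound (fun x => exists q, P q /\ x = mv d q u i + f q i))
  (Hfbdd : exists C, forall q, P q -> norm_inf d (f q) <= C) :
  exists L, 0 < L /\
    forall (t : R) (u0 : vec), 0 <= t ->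
      norm_inf d (fun i => Nisio d P f t u0 i - u0 i) <= L * t * norm_inf d u0.
Proof.
  destruct (diag_uniform_bound d P f HQ Hfin Hfbdd) as [D [HD0 HD]].
  assert (Hf_le0 : forall q, P q -> forall i, (i < d)%nat -> f q i <= 0)
    by (intros q Hq i Hi; apply (proj1 (Hsupf i Hi)); eauto).
  exists (6 * D + 1); split; [lra|]; intros t u0 Ht.
  assert (Hu0 := norm_inf_ge0 d u0).
  apply norm_inf_le; [apply Rmult_le_pos; [apply Rmult_le_pos|]; lra|]; intros i Hi.
  eapply Rle_trans; [apply (Rabs_Nisio_sub_le d P f q0 D); auto|].
  apply Rmult_le_compat_r; [|apply Rmult_le_compat_r]; lra.
Qed.
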